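(* For every prime $p$, there exist a conic $Q\subset\mathbb P^2$ defined over $\mathbb F_{p^2}$ and a point $t\in C\cap Q$ (over $\overline{\mathbb F}_p$) such that $[\mathbb F_{p^2}(t):\mathbb F_{p^2}]=p+1$.
   Context: $C\subset\mathbb P^2$ is the Fermat curve $X_1^{p+1}+X_2^{p+1}+X_3^{p+1}=0$. Conics include degenerate ones (zero loci of nonzero homogeneous quadratic forms over $\mathbb F_{p^2}$). $\mathbb F_{p^2}(t)$ is the field generated over $\mathbb F_{p^2}$ by the ratios of coordinates of $t$. *)

From HB Require Import structures.
From mathcomp Require Import all_boot all_order all_algebra all_field.
Set Implicit Arguments. Unset Strict Implicit. Unset Printing Implicit Defensive.
Import GRing.Theory.
Local Open Scope ring_scope.

(* A homogeneous quadratic form over F in X_1, X_2, X_3, given by its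
   coefficients c i j for i <= j (the entries with i > j are ignored):
   Q(X) = \sum_{i <= j} c i j X_i X_j. *)
Definition qform_nonzero (F : fieldType) (c : 'I_3 -> 'I_3 -> F) : Prop :=
  exists i j : 'I_3, (i <= j)%N /\ c i j != 0.

Definition qform_eval (F : fieldType) (L : fieldExtType F)
    (c : 'I_3 -> 'I_3 -> F) (x : 'I_3 -> L) : L :=
  \sum_(i < 3) \sum_(j < 3 | (i <= j)%N) (c i j)%:A * x i * x j.

Definition proj_point (F : fieldType) (L : fieldExtType F) (x : 'I_3 -> L) : Prop :=
  exists i, x i != 0.

Definition on_fermat (F : fieldType) (L : fieldExtType F) (p : nat)
    (x : 'I_3 -> L) : Prop :=
  \sum_(i < 3) x i ^+ p.+1 = 0.

Definition coord_ratios (F : fieldType) (L : fieldExtType F) (x : 'I_3 -> L) : seq L :=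
  [seq x i / x j | i <- enum 'I_3, j <- [seq j <- enum 'I_3 | x j != 0]].

Definition field_of_point (F : fieldType) (L : fieldExtType F) (x : 'I_3 -> L)
  : {vspace L} :=
  (<<1%VS & coord_ratios x>>)%VS.

(* Let g generate the cyclic group F^*, where F = F_(p^2).  Then rho = g^(p-1)
   has order p + 1 and the trace s = g + g^p is a nonzero element of F_p, so
   lam = g / s and w = - s / g satisfy 1 + w + lam^(p+1) w^2 = 0 and
   w^(p-1) = rho^-1.  If x^(p+1) = w in an extension of F, the point
   t = (1 : x : lam x^2) lies on the Fermat curve and on the conic
   X_1 X_3 = lam X_2^2, and F(t) = F(x).  The Frobenius x |-> x^(p^2) sends x
   to x w^(p-1), so x^(p^(2d)) = x rho^(-d); as x is fixed by the d-th power
   of Frobenius for d = [F(x) : F], p + 1 divides d.  Conversely d <= p + 1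
   because x is a root of X^(p+1) - w. *)

From HB Require Import structures.
From mathcomp Require Import all_boot all_order all_algebra all_field all_solvable.
From mathcomp Require Import zify ring.
Set Implicit Arguments. Unset Strict Implicit. Unset Printing Implicit Defensive.
Import GRing.Theory.
Local Open Scope ring_scope.

Lemma prim_rootV (R : fieldType) n (z : R) :
  n.-primitive_root z -> n.-primitive_root z^-1.
Proof.
move=> prim_z; have n_gt0 := prim_order_gt0 prim_z.
have z_neq0 : z != 0 by rewrite (prim_root_eq0 prim_z) -lt0n.
have -> : z^-1 = z ^+ n.-1.
  apply: (mulIf z_neq0); rewrite mulVf // -exprSr prednK //.
  by rewrite prim_expr_order.
by rewrite prim_root_exp_coprime // coprimePn.
Qed.

Section FieldExtension.

Variables (F : fieldType) (L : fieldExtType F).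

Lemma dim_Fadjoin_lt_size (x : L) (q : {poly L}) :
  q \is a polyOver 1%VS -> q != 0 -> root q x -> (\dim <<1; x>> < size q)%N.
Proof.
move=> q1 q_neq0 qx; rewrite dim_Fadjoin dimv1 muln1 -ltnS -size_minPoly.
by rewrite ltnS dvdp_leq // minPoly_dvdp.
Qed.

Lemma dim_Fadjoin_le_root_Xn (x : L) (a : F) n :
  (0 < n)%N -> x ^+ n = a%:A -> (\dim <<1; x>> <= n)%N.
Proof.
move=> n_gt0 xa; rewrite -ltnS -(size_XnsubC (n := n) (a%:A : L)) //.
apply: dim_Fadjoin_lt_size; last by rewrite rootE !hornerE xa subrr.
  by rewrite rpredB ?rpredX ?polyOverX ?polyOverC ?rpredZ ?mem1v.
by rewrite -size_poly_eq0 size_XnsubC.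
Qed.

Lemma field_of_point_Fadjoin (t : 'I_3 -> L) (x : L) i0 i1 :
  t i0 = 1 -> t i1 = x -> (forall i, t i \in <<1; x>>%VS) ->
  field_of_point t = <<1; x>>%VS.
Proof.
move=> t0 t1 t_in; apply/eqP; rewrite eqEsubv; apply/andP; split.
  apply/Fadjoin_seqP; split=> [|_ /allpairsPdep[i [j [_ _ ->]]]]; first exact: sub1v.
  by rewrite rpredM ?memvV.
apply/FadjoinP; split; first exact: sub1v.
apply: seqv_sub_adjoin; rewrite -t1 -[t i1]divr1 -t0.
apply: allpairs_f_dep; first by rewrite mem_enum.
by rewrite mem_filter mem_enum t0 oner_neq0.
Qed.

End FieldExtension.

Section FiniteField.

Variable F : finFieldType.

Lemma finField_prim_root : exists g : F, (#|F|.-1).-primitive_root g.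
Proof.
pose units := enum (predC1 (0 : F)).
have /hasP[g _ prim_g] : has (#|F|.-1).-primitive_root units; last by exists g.
apply: has_prim_root; rewrite ?enum_uniq -?cardE ?cardC1 //.
- by rewrite -subn1 subn_gt0 finNzRing_gt1.
apply/allP => z; rewrite mem_enum unity_rootE => /= z_neq0.
apply/eqP; apply: (mulIf z_neq0).
by rewrite mul1r -exprSr prednK ?(ltnW (finNzRing_gt1 _)) //; apply: expf_card.
Qed.

Lemma exists_ext_root (P : {poly F}) :
  (1 < size P)%N -> exists (L : fieldExtType F) (x : L), root (map_poly (in_alg L) P) x.
Proof.
move=> P_gt1; have P_neq0 : P != 0 by rewrite -size_poly_gt0 ltnW.
have [L [[|r rs] splitP _]] := FinSplittingFieldFor P_neq0.
  move/eqp_size: splitP; rewrite big_nil size_poly1 size_map_poly => P1.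
  by rewrite P1 in P_gt1.
by exists L, r; rewrite (eqp_root splitP) root_prod_XsubC mem_head.
Qed.

Section Extension.

Variable L : fieldExtType F.

Lemma frobenius_iter (x : L) (c : F) k :
  x ^+ #|F| = x * c%:A -> x ^+ (#|F| ^ k) = x * (c ^+ k)%:A.
Proof.
move=> frob_x; elim: k => [|k IHk]; first by rewrite expr0 scale1r mulr1.
rewrite expnSr exprM IHk exprMn frob_x -(rmorphXn (in_alg L)) expf_card.
by rewrite -mulrA -scalerAl mul1r scalerA -exprS.
Qed.

Lemma prim_root_dvd_dim_Fadjoin (x : L) (c : F) n :
  x != 0 -> x ^+ #|F| = x * c%:A -> n.-primitive_root c -> (n %| \dim <<1; x>>)%N.
Proof.
move=> x_neq0 frob_x prim_c.
have := Fermat's_little_theorem <<1; x>>%AS x.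
rewrite memv_adjoin (frobenius_iter _ frob_x) => /esym/eqP.
rewrite -[X in _ = X]mulr1 => /(mulfI x_neq0).
by move/eqP; rewrite -in_algE fmorph_eq1 -(prim_order_dvd prim_c).
Qed.

End Extension.

End FiniteField.

Section FermatConicCoefficients.

Variables (p : nat) (F : finFieldType).
Hypotheses (p_prime : prime p) (cardF : #|F| = (p ^ 2)%N).

Let p_gt1 : (1 < p)%N := prime_gt1 p_prime.
Let pchar_nat_p : [pchar F].-nat p.
Proof. by rewrite pnatE // (card_finPcharP cardF p_prime). Qed.

Lemma card_unit_factor : #|F|.-1 = (p.-1 * p.+1)%N.
Proof. by rewrite cardF -mulnn; nia. Qed.

Lemma exprpK (u : F) : (u ^+ p) ^+ p = u.
Proof. by rewrite -exprM mulnn -cardF expf_card. Qed.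

Lemma prim_root_expr_pred (g : F) :
  (#|F|.-1).-primitive_root g -> (p.+1).-primitive_root (g ^+ p.-1).
Proof.
rewrite card_unit_factor => /dvdn_prim_root/(_ p.+1 (dvdn_mull _ (dvdnn _))).
by rewrite mulnK.
Qed.

Lemma fermat_conic_coeffs : exists lam w : F,
  [/\ w != 0, 1 + w + lam ^+ p.+1 * w ^+ 2 = 0 & (p.+1).-primitive_root (w ^+ p.-1)].
Proof.
have [g prim_g] := finField_prim_root F.
have prim_rho := prim_root_expr_pred prim_g; set rho := g ^+ p.-1 in prim_rho.
have g_neq0 : g != 0 by rewrite (prim_root_eq0 prim_g) card_unit_factor muln_eq0; lia.
have gp : g ^+ p = g * rho by rewrite /rho -exprS prednK ?prime_gt0.
have rho1_neq0 : 1 + rho != 0.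
  rewrite addrC addr_eq0; apply: contraTneq isT => rho_opp.
  have := eq_prim_root_expr prim_rho 2 0.
  by rewrite rho_opp expr0 sqrrN expr1n eqxx !modn_small //; lia.
pose s := g + g ^+ p.
have s_def : s = g * (1 + rho) by rewrite /s gp mulrDr mulr1.
have s_neq0 : s != 0 by rewrite s_def mulf_neq0.
have sp : s ^+ p = s by rewrite /s exprDn_pchar // exprpK addrC.
exists (g / s), (- s / g); split.
- by rewrite mulf_neq0 ?oppr_eq0 ?invr_eq0.
- rewrite exprS expr_div_n sp gp s_def; field.
  by rewrite g_neq0 rho1_neq0.
have -> : (- s / g) ^+ p.-1 = rho^-1.
  apply: (mulIf (expf_neq0 p.-1 g_neq0)); rewrite -exprMn mulrVK ?unitfE //.
  rewrite mulVf ?expf_neq0 //; apply: (mulIf (_ : - s != 0)); first by rewrite oppr_eq0.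
  by rewrite mul1r -exprSr prednK ?prime_gt0 // exprNn_pchar // sp.
exact: prim_rootV.
Qed.

Lemma expr_card_root_Xn (L : fieldExtType F) (x : L) (w : F) :
  x ^+ p.+1 = w%:A -> x ^+ #|F| = x * (w ^+ p.-1)%:A.
Proof.
move=> xw; have -> : #|F| = (p.+1 * p.-1).+1 by rewrite cardF -mulnn; nia.
by rewrite exprSr exprM xw -(rmorphXn (in_alg L)) mulrC.
Qed.

End FermatConicCoefficients.

Section ConicPoint.

Variables (F : fieldType) (L : fieldExtType F).

Definition fermat_conic (lam : F) : 'I_3 -> 'I_3 -> F :=
  fun i j => if (i == 0 :> nat) && (j == 2 :> nat) then 1
             else if (i == 1 :> nat) && (j == 1 :> nat) then - lam else 0.

Definition conic_point (lam : F) (x : L) : 'I_3 -> L :=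
  fun i => [:: 1; x; lam%:A * x ^+ 2]`_i.

Lemma qform_nonzero_fermat_conic lam : qform_nonzero (fermat_conic lam).
Proof. by exists ord0, ord_max; rewrite /fermat_conic /= oner_neq0. Qed.

Lemma proj_point_conic_point lam x : proj_point (conic_point lam x).
Proof. by exists ord0; rewrite /conic_point /= oner_neq0. Qed.

Lemma qform_eval_conic_point lam x :
  qform_eval (fermat_conic lam) (conic_point lam x) = 0.
Proof.
rewrite /qform_eval; under eq_bigr do rewrite big_mkcond.
rewrite !big_ord_recl !big_ord0 /fermat_conic /conic_point /=.
by rewrite !scale0r scale1r scaleNr; ring.
Qed.

Lemma on_fermat_conic_point p lam w x :
  x ^+ p.+1 = w%:A -> 1 + w + lam ^+ p.+1 * w ^+ 2 = 0 ->
  on_fermat p (conic_point lam x).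
Proof.
move=> xw fermat_lw; rewrite /on_fermat !big_ord_recl big_ord0 /conic_point /=.
rewrite exprMn -exprM mulnC exprM xw expr1n addr0 addrA.
have := congr1 (in_alg L) fermat_lw.
by rewrite !rmorphD rmorphM !rmorphXn rmorph1 rmorph0.
Qed.

Lemma field_of_conic_point lam x :
  field_of_point (conic_point lam x) = <<1; x>>%VS.
Proof.
apply: (@field_of_point_Fadjoin _ _ _ _ ord0 (inord 1)); rewrite /conic_point ?inordK //.
move=> [[|[|[|i]]] i_lt3] //=; rewrite ?mem1v ?memv_adjoin //.
by rewrite rpredM ?rpredX ?rpredZ ?mem1v ?memv_adjoin.
Qed.

End ConicPoint.

Theorem proposition7p2 (p : nat) (hp : prime p)
    (F : finFieldType) (hF : #|F| = (p ^ 2)%N) :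
  exists (L : fieldExtType F) (c : 'I_3 -> 'I_3 -> F) (t : 'I_3 -> L),
    [/\ qform_nonzero c, proj_point t, on_fermat p t,
        qform_eval c t = 0 &
        \dim (field_of_point t) = p.+1].
Proof.
have [lam [w [w_neq0 fermat_lw prim_w]]] := fermat_conic_coeffs hp hF.
have [L [x]] := @exists_ext_root _ ('X^(p.+1) - w%:P) ltac:(by rewrite size_XnsubC).
rewrite rmorphB /= map_polyXn map_polyC rootE !hornerE subr_eq0 => /eqP xw.
have x_neq0 : x != 0.
  apply: contra_neq w_neq0 => x0; apply/eqP.
  by rewrite -(fmorph_eq0 (in_alg L)) -xw x0 expr0n.
have frob_x := expr_card_root_Xn hp hF xw.
exists L, (fermat_conic lam), (conic_point lam x); split.
- exact: qform_nonzero_fermat_conic.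
- exact: proj_point_conic_point.
- exact: on_fermat_conic_point xw fermat_lw.
- exact: qform_eval_conic_point.
rewrite field_of_conic_point; apply/eqP; rewrite eqn_leq (dim_Fadjoin_le_root_Xn (ltn0Sn p) xw) andTb.
exact: dvdn_leq (adim_gt0 _) (prim_root_dvd_dim_Fadjoin x_neq0 frob_x prim_w).
Qed.
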